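(* For $[\mathfrak{p}]\in\mathfrak{F}_4''$ with $\mathfrak{p}=(p_1,p_2,p_3,p_4)$, put $\mathbb{X}_1=\mathbb{X}(p_1,p_2,p_3,p_4)$, $\mathbb{X}_2=\mathbb{X}(p_1,p_3,p_2,p_4)$ and $\mathbb{A}=\mathbb{A}(p_1,p_2,p_3)$. Then $\mathbb{A}\in(-\pi/2,\pi/2)$ and $$|\mathbb{X}_1+\mathbb{X}_2-1|^2=2\Re\left(\mathbb{X}_1\overline{\mathbb{X}_2}(1+e^{-2i\mathbb{A}})\right),$$ with $\mathbb{X}_1+\mathbb{X}_2-1\neq0$, $\Re(\mathbb{X}_1\overline{\mathbb{X}_2}e^{-i\mathbb{A}})>0$ and $\arg(\mathbb{X}_1/\mathbb{X}_2)\neq 2\mathbb{A}$. Moreover, the map $B_0:\mathfrak{F}_4''\to\mathfrak{V}_4$, $B_0([\mathfrak p])=(\mathbb{X}_1,\mathbb{X}_2,\mathbb{A})$, is well defined and bijective, where $\mathfrak{V}_4$ is the set of $(w_1,w_2,a)\in\mathbb{C}^2\times(-\pi/2,\pi/2)$ with $|w_1+w_2-1|^2=2\Re(w_1\overline{w_2}(1+e^{-2ia}))$, $w_1+w_2-1\neq0$, $\Re(w_1\overline{w_2}e^{-ia})>0$ and $\arg(w_1/w_2)\neq 2a$.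
   Context: Let $\mathbb{C}^{2,1}$ denote $\mathbb{C}^3$ with the Hermitian form $\langle \mathbf z,\mathbf w\rangle=z_1\overline{w_3}+z_2\overline{w_2}+z_3\overline{w_1}$. The boundary $\partial\mathbf{H}^2_\mathbb{C}$ is the set of complex lines of null vectors, identified with $(\mathbb{C}\times\mathbb{R})\cup\{\infty\}$, $(z,t)$ corresponding to the line of $(-|z|^2+it,\sqrt2 z,1)^T$ and $\infty$ to that of $(1,0,0)^T$; ${\rm PU}(2,1)$ acts on it. A $\mathbb{C}$-circle is the intersection of $\partial\mathbf{H}^2_\mathbb{C}$ with the projectivisation of a complex 2-dimensional subspace of signature $(1,1)$. Cartan's angular invariant: $\mathbb{A}(p_1,p_2,p_3)=\arg(-\langle\mathbf p_1,\mathbf p_2\rangle\langle\mathbf p_2,\mathbf p_3\rangle\langle\mathbf p_3,\mathbf p_1\rangle)\in[-\pi/2,\pi/2]$ for lifts $\mathbf p_i$. The Korányi–Reimann complex cross-ratio of four distinct points is $\mathbb{X}(p_1,p_2,p_3,p_4)=\frac{\langle\mathbf p_4,\mathbf p_2\rangle\langle\mathbf p_3,\mathbf p_1\rangle}{\langle\mathbf p_4,\mathbf p_1\rangle\langle\mathbf p_3,\mathbf p_2\rangle}$ (independent of lifts, ${\rm PU}(2,1)$-invariant). $\mathfrak{C}_4''$ is the set of ordered quadruples of pairwise distinct boundary points such that $p_1,p_2,p_3$ do not lie on a common $\mathbb{C}$-circle, $p_2,p_3,p_4$ do not lie on a common $\mathbb{C}$-circle, and $p_4$ is not in the orbit of $p_1$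 under the stabiliser of $p_2,p_3$ in ${\rm PU}(2,1)$; $\mathfrak{F}_4''=\mathfrak{C}_4''/{\rm PU}(2,1)$. *)

From Stdlib Require Import Reals.
Open Scope R_scope.

Record Cx := Cmk { Re : R; Im : R }.

Definition C0 : Cx := Cmk 0 0.
Definition C1 : Cx := Cmk 1 0.
Definition Cadd (z w : Cx) : Cx := Cmk (Re z + Re w) (Im z + Im w).
Definition Copp (z : Cx) : Cx := Cmk (- Re z) (- Im z).
Definition Csub (z w : Cx) : Cx := Cadd z (Copp w).
Definition Cmul (z w : Cx) : Cx :=
  Cmk (Re z * Re w - Im z * Im w) (Re z * Im w + Im z * Re w).
Definition Cconj (z : Cx) : Cx := Cmk (Re z) (- Im z).
Definition Cnorm2 (z : Cx) : R := Re z * Re z + Im z * Im z.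
Definition Cabs (z : Cx) : R := sqrt (Cnorm2 z).
Definition Cinv (z : Cx) : Cx := Cmk (Re z / Cnorm2 z) (- Im z / Cnorm2 z).
Definition Cdiv (z w : Cx) : Cx := Cmul z (Cinv w).
Definition Cexpi (a : R) : Cx := Cmk (cos a) (sin a).

(** Principal argument in (-PI, PI] (the usual atan2); arg 0 := 0. *)
Definition Carg (z : Cx) : R :=
  let x := Re z in let y := Im z in
  match Rlt_le_dec 0 x with
  | left _ => atan (y / x)
  | right _ =>
    match Rlt_le_dec x 0 with
    | left _ => match Rle_lt_dec 0 y with
                | left _ => atan (y / x) + PI
                | right _ => atan (y / x) - PI
                end
    | right _ =>
      match Rlt_le_dec 0 y with
      | left _ => PI / 2
      | right _ => match Rlt_le_dec y 0 with
                   | left _ => - (PI / 2)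
                   | right _ => 0
                   end
      end
    end
  end.

Record V3 := mkV { v1 : Cx; v2 : Cx; v3 : Cx }.
Definition V0 : V3 := mkV C0 C0 C0.
Definition Vscal (l : Cx) (v : V3) : V3 :=
  mkV (Cmul l (v1 v)) (Cmul l (v2 v)) (Cmul l (v3 v)).
Definition Vadd (v w : V3) : V3 :=
  mkV (Cadd (v1 v) (v1 w)) (Cadd (v2 v) (v2 w)) (Cadd (v3 v) (v3 w)).

Definition herm (z w : V3) : Cx :=
  Cadd (Cmul (v1 z) (Cconj (v3 w)))
    (Cadd (Cmul (v2 z) (Cconj (v2 w))) (Cmul (v3 z) (Cconj (v1 w)))).

(** 3x3 complex matrices (indices 0,1,2) acting on column vectors. *)
Definition M3 := nat -> nat -> Cx.
Definition mv (G : M3) (v : V3) : V3 :=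
  mkV (Cadd (Cmul (G 0%nat 0%nat) (v1 v)) (Cadd (Cmul (G 0%nat 1%nat) (v2 v)) (Cmul (G 0%nat 2%nat) (v3 v))))
      (Cadd (Cmul (G 1%nat 0%nat) (v1 v)) (Cadd (Cmul (G 1%nat 1%nat) (v2 v)) (Cmul (G 1%nat 2%nat) (v3 v))))
      (Cadd (Cmul (G 2%nat 0%nat) (v1 v)) (Cadd (Cmul (G 2%nat 1%nat) (v2 v)) (Cmul (G 2%nat 2%nat) (v3 v)))).

(** U(2,1): matrices preserving the Hermitian form (automatically invertible,
    the form being non-degenerate).  PU(2,1) = U(2,1)/scalars acts on
    complex lines through U(2,1). *)
Definition isU21 (G : M3) : Prop :=
  forall z w : V3, herm (mv G z) (mv G w) = herm z w.

(** * Boundary points: nonzero null vectors, up to nonzero complex scalars. *)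
Definition isNull (v : V3) : Prop := v <> V0 /\ herm v v = C0.
Definition samePt (p q : V3) : Prop := exists l : Cx, l <> C0 /\ q = Vscal l p.

Definition inSpan2 (u w v : V3) : Prop :=
  exists a b : Cx, v = Vadd (Vscal a u) (Vscal b w).

(** Lines of p, q, r lie on a common Cx-circle: there is a complex
    2-dimensional subspace span(u,w) of signature (1,1) (containing both a
    positive and a negative vector) containing p, q, r. *)
Definition onCommonCcircle (p q r : V3) : Prop :=
  exists u w : V3,
    (forall a b : Cx, Vadd (Vscal a u) (Vscal b w) = V0 -> a = C0 /\ b = C0) /\
    (exists x, inSpan2 u w x /\ Re (herm x x) > 0) /\
    (exists x, inSpan2 u w x /\ Re (herm x x) < 0) /\
    inSpan2 u w p /\ inSpan2 u w q /\ inSpan2 u w r.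

Record Quad := mkQ { qp1 : V3; qp2 : V3; qp3 : V3; qp4 : V3 }.

Definition inC4'' (P : Quad) : Prop :=
  let p1 := qp1 P in let p2 := qp2 P in let p3 := qp3 P in let p4 := qp4 P in
  isNull p1 /\ isNull p2 /\ isNull p3 /\ isNull p4 /\
  ~ samePt p1 p2 /\ ~ samePt p1 p3 /\ ~ samePt p1 p4 /\
  ~ samePt p2 p3 /\ ~ samePt p2 p4 /\ ~ samePt p3 p4 /\
  ~ onCommonCcircle p1 p2 p3 /\
  ~ onCommonCcircle p2 p3 p4 /\
  ~ (exists G : M3, isU21 G /\ samePt p2 (mv G p2) /\ samePt p3 (mv G p3)
                    /\ samePt p4 (mv G p1)).

(** Two quadruples represent the same point of F_4'' = C_4''/PU(2,1). *)
Definition quadEquiv (P Q : Quad) : Prop :=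
  exists G : M3, isU21 G /\
    samePt (mv G (qp1 P)) (qp1 Q) /\ samePt (mv G (qp2 P)) (qp2 Q) /\
    samePt (mv G (qp3 P)) (qp3 Q) /\ samePt (mv G (qp4 P)) (qp4 Q).

Definition crossX (p1 p2 p3 p4 : V3) : Cx :=
  Cdiv (Cmul (herm p4 p2) (herm p3 p1)) (Cmul (herm p4 p1) (herm p3 p2)).
Definition cartanA (p1 p2 p3 : V3) : R :=
  Carg (Copp (Cmul (Cmul (herm p1 p2) (herm p2 p3)) (herm p3 p1))).

Definition B0 (P : Quad) : Cx * Cx * R :=
  (crossX (qp1 P) (qp2 P) (qp3 P) (qp4 P),
   crossX (qp1 P) (qp3 P) (qp2 P) (qp4 P),
   cartanA (qp1 P) (qp2 P) (qp3 P)).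

Definition inV4 (w1 w2 : Cx) (a : R) : Prop :=
  - (PI / 2) < a < PI / 2 /\
  Cnorm2 (Csub (Cadd w1 w2) C1)
    = 2 * Re (Cmul (Cmul w1 (Cconj w2)) (Cadd C1 (Cexpi (- (2 * a))))) /\
  Csub (Cadd w1 w2) C1 <> C0 /\
  Re (Cmul (Cmul w1 (Cconj w2)) (Cexpi (- a))) > 0 /\
  Carg (Cdiv w1 w2) <> 2 * a.

From Pilot Require Import Defs.
From Stdlib Require Import Reals Lra Ring Field.
Open Scope R_scope.

(* Everything is computed on lifts.  For null vectors p, q we have <p,q> = 0
   iff p and q define the same boundary point, and three null vectors lie on
   a common C-circle iff det(p1,p2,p3) = 0.  The Gram determinant identity
   gives 2 Re T(p1,p2,p3) = |det(p1,p2,p3)|^2 for the triple product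
   T = -<p1,p2><p2,p3><p3,p1>; so off a C-circle Re T > 0 and the Cartan
   invariant lies in (-pi/2, pi/2).  Two such triples are U(2,1)-equivalent
   (up to rescaling of the lifts) iff their triple products are positive
   multiples of each other (triple transitivity).

   Writing p4 in the basis p1,p2,p3 and using <p4,p4> = 0 yields the
   identity |N|^2 = (2 Re T123)(2 Re T423) between Gram entries, from which
   every defining condition of V4 follows (B0_in_V4); moreover
   arg(X1/X2) = arg T123 + arg T423, so the condition arg(X1/X2) <> 2A is
   exactly the orbit condition in the definition of C4''.  Invariance of B0
   is a rescaling computation, injectivity combines triple transitivity with
   non-degeneracy of the form, and surjectivity is an explicit normal form. *)

(* The complex unit (the name C1 is also used by the Reals library). *)
Local Notation C1 := Defs.C1.

(** * Complex arithmetic *)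

Lemma Cx_ext (z w : Cx) : Re z = Re w -> Im z = Im w -> z = w.
Proof. destruct z, w; simpl; intros -> ->; reflexivity. Qed.

Ltac cx_ext := apply Cx_ext; simpl; try ring.

Lemma C1_neq_C0 : C1 <> C0.
Proof. intro H. injection H. lra. Qed.

Lemma Cnorm2_nonneg (z : Cx) : 0 <= Cnorm2 z.
Proof. destruct z; unfold Cnorm2; simpl; nra. Qed.

Lemma Cnorm2_eq0 (z : Cx) : Cnorm2 z = 0 -> z = C0.
Proof. destruct z as [a b]; unfold Cnorm2; simpl; intro; apply Cx_ext; simpl; nra. Qed.

Lemma Cnorm2_pos (z : Cx) : z <> C0 -> 0 < Cnorm2 z.
Proof.
  intro Hz. destruct (Rle_lt_or_eq_dec _ _ (Cnorm2_nonneg z)) as [H|H]; [exact H|].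
  exfalso; apply Hz, Cnorm2_eq0; auto.
Qed.

Lemma Cx_eq0_dec (z : Cx) : z = C0 \/ z <> C0.
Proof.
  destruct (Req_dec (Cnorm2 z) 0) as [H|H]; [left; apply Cnorm2_eq0; auto|].
  right; intro E; subst; apply H; unfold Cnorm2; simpl; ring.
Qed.

Lemma Cx_ring : ring_theory C0 C1 Cadd Cmul Csub Copp (@eq Cx).
Proof. constructor; intros; unfold Csub; cx_ext. Qed.
Add Ring Cxring : Cx_ring.

Lemma Cx_field : field_theory C0 C1 Cadd Cmul Csub Copp Cdiv Cinv (@eq Cx).
Proof.
  constructor; [exact Cx_ring | exact C1_neq_C0 | reflexivity |].
  intros z Hz. pose proof (Cnorm2_pos _ Hz) as Hp.
  destruct z as [a b]; unfold Cinv, Cnorm2 in *; simpl in *.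
  apply Cx_ext; simpl; field; lra.
Qed.
Add Field Cxfield : Cx_field.

Lemma Cmul_eq0 (a b : Cx) : Cmul a b = C0 -> a = C0 \/ b = C0.
Proof.
  intros H. destruct (Cx_eq0_dec a) as [Ha|Ha]; [left; exact Ha|right].
  replace b with (Cdiv (Cmul a b) a) by (field; auto). rewrite H; field; auto.
Qed.

Lemma Cmul_neq0 (a b : Cx) : a <> C0 -> b <> C0 -> Cmul a b <> C0.
Proof. intros Ha Hb H. destruct (Cmul_eq0 _ _ H); contradiction. Qed.

Lemma Cinv_neq0 (a : Cx) : a <> C0 -> Cinv a <> C0.
Proof.
  intros Ha H. apply C1_neq_C0.
  replace C1 with (Cmul a (Cinv a)) by (field; auto). rewrite H; ring.
Qed.

Lemma Copp_neq0 (a : Cx) : a <> C0 -> Copp a <> C0.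
Proof. intros H E. apply H. replace a with (Copp (Copp a)) by ring. rewrite E; ring. Qed.

Lemma Cdiv_0 (x : Cx) : Cdiv x C0 = C0.
Proof. unfold Cdiv, Cinv, Cnorm2; cx_ext; unfold Rdiv; ring. Qed.

(* Common factors cancel in a quotient, even when the denominator vanishes. *)
Lemma Cdiv_cancel (c n d : Cx) : c <> C0 -> Cdiv (Cmul c n) (Cmul c d) = Cdiv n d.
Proof.
  intros Hc. destruct (Cx_eq0_dec d) as [->|Hd].
  - replace (Cmul c C0) with C0 by ring. rewrite !Cdiv_0; reflexivity.
  - field. split; auto.
Qed.

Lemma Cconj_add x y : Cconj (Cadd x y) = Cadd (Cconj x) (Cconj y). Proof. cx_ext. Qed.
Lemma Cconj_mul x y : Cconj (Cmul x y) = Cmul (Cconj x) (Cconj y). Proof. cx_ext. Qed.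
Lemma Cconj_opp x : Cconj (Copp x) = Copp (Cconj x). Proof. cx_ext. Qed.
Lemma Cconj_sub x y : Cconj (Csub x y) = Csub (Cconj x) (Cconj y). Proof. cx_ext. Qed.
Lemma Cconj_involutive x : Cconj (Cconj x) = x. Proof. cx_ext. Qed.
Lemma Cconj_0 : Cconj C0 = C0. Proof. cx_ext. Qed.
Lemma Cconj_1 : Cconj C1 = C1. Proof. cx_ext. Qed.
Lemma Cconj_inv x : Cconj (Cinv x) = Cinv (Cconj x).
Proof.
  destruct x as [a b]; unfold Cinv, Cnorm2; apply Cx_ext; simpl;
    replace (- b * - b) with (b * b) by ring; [reflexivity | unfold Rdiv; ring].
Qed.
Lemma Cconj_div x y : Cconj (Cdiv x y) = Cdiv (Cconj x) (Cconj y).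
Proof. unfold Cdiv. rewrite Cconj_mul, Cconj_inv. reflexivity. Qed.

Hint Rewrite Cconj_add Cconj_mul Cconj_opp Cconj_sub Cconj_involutive
  Cconj_0 Cconj_1 Cconj_inv Cconj_div : cconj.

Lemma Cconj_neq0 (z : Cx) : z <> C0 -> Cconj z <> C0.
Proof. intros H E. apply H. rewrite <- (Cconj_involutive z), E. apply Cconj_0. Qed.

Ltac nonzero := repeat split;
  repeat (first [ assumption | exact C1_neq_C0 | apply Copp_neq0 | apply Cmul_neq0
                | apply Cconj_neq0 | apply Cinv_neq0 ]).

Definition RtoC (r : R) : Cx := Cmk r 0.

Lemma Cconj_RtoC r : Cconj (RtoC r) = RtoC r. Proof. unfold RtoC; cx_ext. Qed.
Hint Rewrite Cconj_RtoC : cconj.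

Lemma RtoC_mul r s : RtoC (r * s) = Cmul (RtoC r) (RtoC s). Proof. unfold RtoC; cx_ext. Qed.
Lemma RtoC_inj r s : RtoC r = RtoC s -> r = s.
Proof. unfold RtoC; intro H; injection H; auto. Qed.
Lemma RtoC_neq0 r : r <> 0 -> RtoC r <> C0.
Proof. unfold RtoC; intros H H'; injection H'; auto. Qed.
Lemma RtoC_inv r : r <> 0 -> RtoC (/ r) = Cdiv C1 (RtoC r).
Proof. intros H. unfold RtoC, Cdiv, Cinv, Cnorm2; cx_ext; field; auto. Qed.
Lemma RtoC_div r s : s <> 0 -> RtoC (r / s) = Cdiv (RtoC r) (RtoC s).
Proof. intros H. unfold RtoC, Cdiv, Cinv, Cnorm2; cx_ext; field; auto. Qed.
Lemma Re_RtoC_mul r z : Re (Cmul (RtoC r) z) = r * Re z.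
Proof. simpl; ring. Qed.

Lemma Cmul_conj z : Cmul z (Cconj z) = RtoC (Cnorm2 z).
Proof. unfold RtoC, Cnorm2; cx_ext. Qed.
Lemma Cadd_conj z : Cadd z (Cconj z) = RtoC (2 * Re z).
Proof. unfold RtoC; cx_ext. Qed.

Lemma Re_pos_neq0 (z : Cx) : 0 < Re z -> z <> C0.
Proof. intros H E; rewrite E in H; simpl in H; lra. Qed.

(** * Argument and polar form *)

Lemma Cabs_pos (z : Cx) : z <> C0 -> 0 < Cabs z.
Proof. intros H. unfold Cabs. apply sqrt_lt_R0, Cnorm2_pos; auto. Qed.

Lemma Cexpi_add a b : Cexpi (a + b) = Cmul (Cexpi a) (Cexpi b).
Proof. unfold Cexpi; apply Cx_ext; simpl; [rewrite cos_plus|rewrite sin_plus]; ring. Qed.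

Lemma Cexpi_opp a : Cexpi (- a) = Cconj (Cexpi a).
Proof. unfold Cexpi; apply Cx_ext; simpl; [rewrite cos_neg|rewrite sin_neg]; ring. Qed.

Lemma Carg_right (z : Cx) : 0 < Re z -> Carg z = atan (Im z / Re z).
Proof. intros H. unfold Carg. destruct (Rlt_le_dec 0 (Re z)); [reflexivity|lra]. Qed.

Lemma Carg_right_bound (z : Cx) : 0 < Re z -> - (PI/2) < Carg z < PI/2.
Proof. intros H. rewrite Carg_right by auto. pose proof (atan_bound (Im z / Re z)). lra. Qed.

Lemma polar_right (z : Cx) : 0 < Re z -> z = Cmul (RtoC (Cabs z)) (Cexpi (Carg z)).
Proof.
  intros H. rewrite Carg_right by auto. destruct z as [x y]; simpl in *.
  unfold Cabs, Cnorm2, Cexpi, RtoC; simpl. rewrite cos_atan, sin_atan.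
  replace (x * x + y * y) with ((x * x) * (1 + (y / x)²)) by (unfold Rsqr; field; lra).
  rewrite sqrt_mult_alt, sqrt_square by (unfold Rsqr; nra).
  assert (0 < sqrt (1 + (y/x)²)) by (apply sqrt_lt_R0; pose proof (Rle_0_sqr (y/x)); lra).
  apply Cx_ext; simpl; field; lra.
Qed.

Lemma Cexpi_arg (z : Cx) : 0 < Re z -> Cexpi (Carg z) = Cdiv z (RtoC (Cabs z)).
Proof.
  intros H. pose proof (Cabs_pos _ (Re_pos_neq0 _ H)).
  assert (RtoC (Cabs z) <> C0) by (apply RtoC_neq0; lra).
  rewrite (polar_right z H) at 2. field. auto.
Qed.

Lemma Cexpi_neg_arg (z : Cx) : 0 < Re z -> Cexpi (- Carg z) = Cdiv (Cconj z) (RtoC (Cabs z)).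
Proof.
  intros H. rewrite Cexpi_opp, Cexpi_arg by auto. autorewrite with cconj. reflexivity.
Qed.

(* e^{-2i arg z} = conj z / z: the form in which 2A enters the identity of V4. *)
Lemma Cexpi_neg_2arg (z : Cx) : 0 < Re z -> Cexpi (- (2 * Carg z)) = Cdiv (Cconj z) z.
Proof.
  intros H. pose proof (Re_pos_neq0 _ H) as Hz. pose proof (Cabs_pos _ Hz).
  assert (RtoC (Cabs z) <> C0) by (apply RtoC_neq0; lra).
  assert (Habs : Cmul (RtoC (Cabs z)) (RtoC (Cabs z)) = Cmul z (Cconj z)).
  { unfold Cabs. rewrite <- RtoC_mul, sqrt_sqrt, Cmul_conj by apply Cnorm2_nonneg.
    reflexivity. }
  replace (- (2 * Carg z)) with (- Carg z + - Carg z) by ring.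
  rewrite Cexpi_add, Cexpi_neg_arg by auto.
  transitivity (Cdiv (Cmul (Cconj z) (Cmul z (Cconj z)))
                     (Cmul z (Cmul (RtoC (Cabs z)) (RtoC (Cabs z))))).
  - field; auto.
  - rewrite Habs. field. nonzero.
Qed.

Lemma Carg_polar_right rho th : 0 < rho -> - (PI/2) < th < PI/2 ->
  Carg (Cmk (rho * cos th) (rho * sin th)) = th.
Proof.
  intros Hr Hth. assert (0 < cos th) by (apply cos_gt_0; lra).
  rewrite Carg_right by (simpl; nra). simpl.
  replace (rho * sin th / (rho * cos th)) with (tan th) by (unfold tan; field; lra).
  apply atan_tan; lra.
Qed.

Lemma Carg_polar_upper_left rho th : 0 < rho -> PI/2 < th <= PI ->
  Carg (Cmk (rho * cos th) (rho * sin th)) = th.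
Proof.
  intros Hr Hth. pose proof PI_RGT_0.
  assert (Hc : cos th < 0) by (apply cos_lt_0; lra).
  assert (Hs : 0 <= sin th) by (apply sin_ge_0; lra).
  assert (Hc' : cos (th - PI) <> 0)
    by (rewrite cos_minus, cos_PI, sin_PI; intro; nra).
  unfold Carg; simpl.
  destruct (Rlt_le_dec 0 (rho * cos th)); [nra|].
  destruct (Rlt_le_dec (rho * cos th) 0); [|nra].
  destruct (Rle_lt_dec 0 (rho * sin th)); [|nra].
  replace (rho * sin th / (rho * cos th)) with (tan (th - PI)).
  - rewrite atan_tan by lra. ring.
  - unfold tan. rewrite sin_minus, cos_minus, cos_PI, sin_PI. field. split; lra.
Qed.

Lemma Carg_polar_lower_left rho th : 0 < rho -> - PI < th < - (PI/2) ->
  Carg (Cmk (rho * cos th) (rho * sin th)) = th.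
Proof.
  intros Hr Hth. pose proof PI_RGT_0.
  assert (Hc : cos th < 0).
  { replace th with ((th + PI) - PI) by ring. rewrite cos_minus, cos_PI, sin_PI.
    assert (0 < cos (th + PI)) by (apply cos_gt_0; lra). nra. }
  assert (Hs : sin th < 0) by (apply sin_lt_0_var; lra).
  unfold Carg; simpl.
  destruct (Rlt_le_dec 0 (rho * cos th)); [nra|].
  destruct (Rlt_le_dec (rho * cos th) 0); [|nra].
  destruct (Rle_lt_dec 0 (rho * sin th)); [nra|].
  replace (rho * sin th / (rho * cos th)) with (tan (th + PI)).
  - rewrite atan_tan by lra. ring.
  - unfold tan. rewrite neg_sin, neg_cos. field. split; lra.
Qed.

Lemma Carg_polar rho th : 0 < rho -> - PI < th <= PI ->
  Carg (Cmul (RtoC rho) (Cexpi th)) = th.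
Proof.
  intros Hr Hth.
  replace (Cmul (RtoC rho) (Cexpi th)) with (Cmk (rho * cos th) (rho * sin th))
    by (unfold RtoC, Cexpi; cx_ext).
  destruct (Rtotal_order th (PI/2)) as [H1|[H1|H1]];
  [destruct (Rtotal_order th (-(PI/2))) as [H2|[H2|H2]]|..].
  - apply Carg_polar_lower_left; lra.
  - subst th. rewrite cos_neg, sin_neg, cos_PI2, sin_PI2. unfold Carg; simpl.
    repeat match goal with |- context [Rlt_le_dec ?a ?b] => destruct (Rlt_le_dec a b) end;
      lra.
  - apply Carg_polar_right; lra.
  - subst th. rewrite cos_PI2, sin_PI2. unfold Carg; simpl.
    repeat match goal with |- context [Rlt_le_dec ?a ?b] => destruct (Rlt_le_dec a b) end;
      lra.
  - apply Carg_polar_upper_left; lra.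
Qed.

Lemma Carg_scale r z : 0 < r -> Carg (Cmul (RtoC r) z) = Carg z.
Proof.
  intros Hr. destruct z as [x y]. unfold Carg, RtoC; simpl.
  replace (r * x - 0 * y) with (r * x) by ring. replace (r * y + 0 * x) with (r * y) by ring.
  destruct (Req_dec x 0) as [Hx|Hx].
  - subst x. rewrite Rmult_0_r.
    repeat match goal with |- context [Rlt_le_dec ?a ?b] => destruct (Rlt_le_dec a b) end;
      try nra; reflexivity.
  - replace (r * y / (r * x)) with (y / x) by (field; lra).
    repeat match goal with |- context [Rlt_le_dec ?a ?b] => destruct (Rlt_le_dec a b) end;
      try nra;
    repeat match goal with |- context [Rle_lt_dec ?a ?b] => destruct (Rle_lt_dec a b) end;
      try nra; reflexivity.
Qed.

Lemma Carg_eq_pos_multiple (z w : Cx) : 0 < Re z -> 0 < Re w ->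
  Carg z = Carg w -> exists r, 0 < r /\ w = Cmul (RtoC r) z.
Proof.
  intros Hz Hw E.
  pose proof (Cabs_pos _ (Re_pos_neq0 _ Hz)). pose proof (Cabs_pos _ (Re_pos_neq0 _ Hw)).
  exists (Cabs w / Cabs z). split; [apply Rdiv_lt_0_compat; auto|].
  rewrite (polar_right w Hw) at 1. rewrite <- E, Cexpi_arg, RtoC_div by (auto; lra).
  assert (RtoC (Cabs z) <> C0) by (apply RtoC_neq0; lra).
  field. auto.
Qed.

(** * Vectors of C^{2,1} and the Hermitian form *)

Lemma Vscal_Vscal a b x : Vscal a (Vscal b x) = Vscal (Cmul a b) x.
Proof. destruct x; unfold Vscal; simpl; f_equal; ring. Qed.

Lemma Vscal_1 x : Vscal C1 x = x.
Proof. destruct x; unfold Vscal; simpl; f_equal; ring. Qed.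

Lemma Vscal_inv m x y : m <> C0 -> x = Vscal m y -> y = Vscal (Cinv m) x.
Proof.
  intros Hm ->. rewrite Vscal_Vscal.
  replace (Cmul (Cinv m) m) with C1 by (field; auto). rewrite Vscal_1; reflexivity.
Qed.

Lemma Vadd_opp_eq0 x z c : Vadd x (Vscal (Copp c) z) = V0 -> x = Vscal c z.
Proof.
  destruct x as [x1 x2 x3], z as [z1 z2 z3]. unfold Vadd, Vscal, V0. intros H.
  pose proof (f_equal v1 H) as H1; pose proof (f_equal v2 H) as H2;
  pose proof (f_equal v3 H) as H3; simpl in *. f_equal.
  - replace x1 with (Cadd (Cadd x1 (Cmul (Copp c) z1)) (Cmul c z1)) by ring. rewrite H1; ring.
  - replace x2 with (Cadd (Cadd x2 (Cmul (Copp c) z2)) (Cmul c z2)) by ring. rewrite H2; ring.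
  - replace x3 with (Cadd (Cadd x3 (Cmul (Copp c) z3)) (Cmul c z3)) by ring. rewrite H3; ring.
Qed.

Lemma herm_sym x y : herm y x = Cconj (herm x y).
Proof. destruct x, y; unfold herm; simpl; autorewrite with cconj; ring. Qed.

Lemma herm_scal_l x y l : herm (Vscal l x) y = Cmul l (herm x y).
Proof. destruct x, y; unfold herm, Vscal; simpl; ring. Qed.

Lemma herm_scal_r x y l : herm x (Vscal l y) = Cmul (Cconj l) (herm x y).
Proof. destruct x, y; unfold herm, Vscal; simpl; autorewrite with cconj; ring. Qed.

Lemma herm_scal x y l m : herm (Vscal l x) (Vscal m y) = Cmul (Cmul l (Cconj m)) (herm x y).
Proof. rewrite herm_scal_l, herm_scal_r. ring. Qed.

Lemma herm_V0_l x : herm V0 x = C0.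
Proof. destruct x; unfold herm, V0; simpl; ring. Qed.

Lemma herm_add_l x y z : herm (Vadd x y) z = Cadd (herm x z) (herm y z).
Proof. destruct x, y, z; unfold herm, Vadd; simpl; ring. Qed.

Lemma herm_add_r x y z : herm z (Vadd x y) = Cadd (herm z x) (herm z y).
Proof. destruct x, y, z; unfold herm, Vadd; simpl; autorewrite with cconj; ring. Qed.

Definition comb3 (c1 c2 c3 : Cx) (x1 x2 x3 : V3) : V3 :=
  Vadd (Vadd (Vscal c1 x1) (Vscal c2 x2)) (Vscal c3 x3).

Lemma herm_comb3_r c1 c2 c3 x1 x2 x3 w :
  herm w (comb3 c1 c2 c3 x1 x2 x3) =
  Cadd (Cadd (Cmul (Cconj c1) (herm w x1)) (Cmul (Cconj c2) (herm w x2)))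
       (Cmul (Cconj c3) (herm w x3)).
Proof. unfold comb3. rewrite !herm_add_r, !herm_scal_r. reflexivity. Qed.

Lemma null_self p : isNull p -> herm p p = C0.
Proof. intros [_ H]; exact H. Qed.

Lemma samePt_sym p q : samePt p q -> samePt q p.
Proof.
  intros [l [Hl ->]]. exists (Cinv l); split; [apply Cinv_neq0; auto|].
  apply Vscal_inv; auto.
Qed.

Lemma samePt_herm p q : isNull p -> samePt p q -> herm p q = C0.
Proof. intros Hp [l [_ ->]]. rewrite herm_scal_r, null_self by auto. ring. Qed.

Lemma not_samePt p q : isNull p -> herm p q <> C0 -> ~ samePt p q.
Proof. intros Hp H S. apply H, samePt_herm; auto. Qed.

Lemma not_samePt' p q : isNull q -> herm q p <> C0 -> ~ samePt p q.
Proof. intros Hq H S. apply (not_samePt q p Hq H), samePt_sym, S. Qed.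

Lemma null_v3_zero a b : herm (mkV a b C0) (mkV a b C0) = C0 -> b = C0.
Proof.
  intros H. apply Cnorm2_eq0. apply (f_equal Re) in H.
  destruct a, b; unfold herm, Cnorm2 in *; simpl in *. lra.
Qed.

(* Two orthogonal null vectors normalised by v3 = 1 coincide: the form
   restricted to the affine chart is a positive-definite quadratic. *)
Lemma null_chart_orth a b d e :
  herm (mkV a b C1) (mkV a b C1) = C0 -> herm (mkV d e C1) (mkV d e C1) = C0 ->
  herm (mkV a b C1) (mkV d e C1) = C0 -> a = d /\ b = e.
Proof.
  destruct a as [x1 y1], b as [u1 v1], d as [x2 y2], e as [u2 v2].
  unfold herm; simpl. intros H1 H2 H3.
  injection H1; injection H2; injection H3; intros I3 R3 I2 R2 I1 R1.
  assert (E : (u1 - u2) * (u1 - u2) + (v1 - v2) * (v1 - v2) = 0) by lra.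
  pose proof (Rle_0_sqr (u1 - u2)); pose proof (Rle_0_sqr (v1 - v2)); unfold Rsqr in *.
  assert (Hu : (u1 - u2) * (u1 - u2) = 0) by lra.
  assert (Hv : (v1 - v2) * (v1 - v2) = 0) by lra.
  apply Rmult_integral in Hu, Hv.
  assert (u1 = u2) by (destruct Hu; lra). assert (v1 = v2) by (destruct Hv; lra). subst.
  split; apply Cx_ext; simpl; nra.
Qed.

Lemma null_chart (p : V3) : v3 p <> C0 ->
  p = Vscal (v3 p) (mkV (Cdiv (v1 p) (v3 p)) (Cdiv (v2 p) (v3 p)) C1).
Proof. destruct p as [a b c]; simpl; intro Hc; unfold Vscal; simpl; f_equal; field; auto. Qed.

Lemma null_orth_samePt p q : isNull p -> isNull q -> herm p q = C0 -> samePt p q.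
Proof.
  intros [Hp0 Hp] [Hq0 Hq] Hpq.
  destruct (Cx_eq0_dec (v3 p)) as [Hc|Hc]; [|destruct (Cx_eq0_dec (v3 q)) as [Hf|Hf]].
  - (* p = (a,0,0); orthogonality kills v3 q, hence also v2 q *)
    destruct p as [a b c], q as [d e f]; simpl in Hc; subst c.
    pose proof (null_v3_zero _ _ Hp); subst b.
    assert (Ha : a <> C0) by (intro; subst; apply Hp0; reflexivity).
    assert (Hf : f = C0).
    { unfold herm in Hpq; simpl in Hpq.
      assert (Cmul a (Cconj f) = C0) by (rewrite <- Hpq; autorewrite with cconj; ring).
      destruct (Cmul_eq0 _ _ H) as [|H']; [contradiction|].
      rewrite <- (Cconj_involutive f), H'; apply Cconj_0. }
    subst f. pose proof (null_v3_zero _ _ Hq); subst e.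
    exists (Cdiv d a). split.
    + intro H. apply Hq0. replace d with (Cmul (Cdiv d a) a) by (field; auto).
      rewrite H. unfold V0; f_equal; ring.
    + unfold Vscal; simpl; f_equal; field; auto.
  - (* q = (d,0,0) is then orthogonal to p only if d = 0 *)
    exfalso. destruct p as [a b c], q as [d e f]; simpl in Hc, Hf; subst f.
    pose proof (null_v3_zero _ _ Hq); subst e.
    unfold herm in Hpq; simpl in Hpq.
    assert (Cmul c (Cconj d) = C0) by (rewrite <- Hpq; autorewrite with cconj; ring).
    destruct (Cmul_eq0 _ _ H) as [|H']; [contradiction|].
    apply Hq0. rewrite <- (Cconj_involutive d), H', Cconj_0; reflexivity.
  - (* both in the affine chart v3 = 1 *)
    rewrite (null_chart p Hc) in Hp, Hpq |- *. rewrite (null_chart q Hf) in Hq, Hpq |- *.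
    rewrite herm_scal in Hp, Hq, Hpq.
    destruct (null_chart_orth (Cdiv (v1 p) (v3 p)) (Cdiv (v2 p) (v3 p))
                              (Cdiv (v1 q) (v3 q)) (Cdiv (v2 q) (v3 q))) as [E1 E2].
    + destruct (Cmul_eq0 _ _ Hp); [|assumption]. exfalso. revert H; nonzero.
    + destruct (Cmul_eq0 _ _ Hq); [|assumption]. exfalso. revert H; nonzero.
    + destruct (Cmul_eq0 _ _ Hpq); [|assumption]. exfalso. revert H; nonzero.
    + exists (Cdiv (v3 q) (v3 p)). split.
      * intro H. apply Hf. replace (v3 q) with (Cmul (Cdiv (v3 q) (v3 p)) (v3 p))
          by (field; auto). rewrite H; ring.
      * rewrite Vscal_Vscal, <- E1, <- E2. f_equal. field. auto.
Qed.

Lemma herm_neq0 p q : isNull p -> isNull q -> ~ samePt p q -> herm p q <> C0.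
Proof. intros Hp Hq Hs H. apply Hs, null_orth_samePt; auto. Qed.

Lemma herm_neq0' p q : isNull p -> isNull q -> ~ samePt q p -> herm p q <> C0.
Proof. intros Hp Hq Hs. apply herm_neq0; auto. intro E; apply Hs, samePt_sym; auto. Qed.

(** * Determinants and C-circles *)

Definition det3 (a b c : V3) : Cx :=
  let '(mkV a1 a2 a3) := a in let '(mkV b1 b2 b3) := b in let '(mkV c1 c2 c3) := c in
  Cadd (Cmul a1 (Csub (Cmul b2 c3) (Cmul b3 c2)))
   (Cadd (Copp (Cmul b1 (Csub (Cmul a2 c3) (Cmul a3 c2))))
         (Cmul c1 (Csub (Cmul a2 b3) (Cmul a3 b2)))).

(* The 2x2 minor on the first two coordinates, and the cyclic rotation of
   coordinates used to reduce to the case where this minor is the relevant one. *)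
Definition minor12 (a b : V3) : Cx := Csub (Cmul (v1 a) (v2 b)) (Cmul (v2 a) (v1 b)).
Definition rot (v : V3) : V3 := mkV (v2 v) (v3 v) (v1 v).

Lemma rot_inj v w : rot v = rot w -> v = w.
Proof. destruct v, w; unfold rot; simpl; intro H; injection H; intros; subst; reflexivity. Qed.
Lemma rot_neq0 v : v <> V0 -> rot v <> V0.
Proof. intros H E. apply H, rot_inj. rewrite E. reflexivity. Qed.
Lemma det3_rot a b c : det3 (rot a) (rot b) (rot c) = det3 a b c.
Proof. destruct a, b, c; unfold det3, rot; simpl; ring. Qed.

Lemma samePt_rot p q : samePt (rot p) (rot q) -> samePt p q.
Proof. intros [l [Hl E]]. exists l; split; auto. apply rot_inj. rewrite E; reflexivity. Qed.

Lemma samePt_of_minors_chart a b : v1 a <> C0 -> b <> V0 ->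
  minor12 a b = C0 -> minor12 (rot (rot a)) (rot (rot b)) = C0 -> samePt a b.
Proof.
  destruct a as [a1 a2 a3], b as [b1 b2 b3]; unfold minor12, rot; simpl.
  intros Ha Hb M12 M31.
  assert (Hl : Cdiv b1 a1 <> C0).
  { intro E. apply Hb. assert (b1 = C0) by
      (replace b1 with (Cmul (Cdiv b1 a1) a1) by (field; auto); rewrite E; ring).
    subst b1. unfold V0; f_equal.
    - replace b2 with (Cdiv (Csub (Cmul a1 b2) (Cmul a2 C0)) a1) by (field; auto).
      rewrite M12. field; auto.
    - replace b3 with (Cdiv (Csub (Cmul a3 C0) (Csub (Cmul a3 C0) (Cmul a1 b3))) a1)
        by (field; auto). rewrite M31. field; auto. }
  exists (Cdiv b1 a1). split; [exact Hl|]. unfold Vscal; simpl. f_equal.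
  - field; auto.
  - replace b2 with (Cdiv (Cadd (Csub (Cmul a1 b2) (Cmul a2 b1)) (Cmul a2 b1)) a1)
      by (field; auto). rewrite M12. field; auto.
  - replace b3 with (Cdiv (Csub (Cmul a3 b1) (Csub (Cmul a3 b1) (Cmul a1 b3))) a1)
      by (field; auto). rewrite M31. field; auto.
Qed.

Lemma samePt_of_minors a b : a <> V0 -> b <> V0 -> minor12 a b = C0 ->
  minor12 (rot a) (rot b) = C0 -> minor12 (rot (rot a)) (rot (rot b)) = C0 -> samePt a b.
Proof.
  intros Ha Hb M12 M23 M31.
  destruct a as [a1 a2 a3], b as [b1 b2 b3].
  destruct (Cx_eq0_dec a1) as [A1|A1]; [destruct (Cx_eq0_dec a2) as [A2|A2]|].
  - (* a3 <> 0: rotate twice *)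
    apply samePt_rot, samePt_rot, samePt_of_minors_chart; auto using rot_neq0.
    simpl. intro A3. subst. apply Ha; reflexivity.
  - apply samePt_rot, samePt_of_minors_chart; auto using rot_neq0.
  - apply samePt_of_minors_chart; auto.
Qed.

Lemma span_of_det0_chart a b c : minor12 a b <> C0 -> det3 a b c = C0 ->
  exists al be, c = Vadd (Vscal al a) (Vscal be b).
Proof.
  destruct a as [a1 a2 a3], b as [b1 b2 b3], c as [c1 c2 c3]; unfold minor12; simpl.
  intros M Hd.
  exists (Cdiv (Csub (Cmul c1 b2) (Cmul c2 b1)) (Csub (Cmul a1 b2) (Cmul a2 b1))),
         (Cdiv (Csub (Cmul a1 c2) (Cmul a2 c1)) (Csub (Cmul a1 b2) (Cmul a2 b1))).
  unfold Vadd, Vscal; simpl; f_equal; [field; auto | field; auto |].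
  unfold det3 in Hd. match type of Hd with ?D = _ =>
    assert (E : c3 = Csub c3 (Cdiv D (Csub (Cmul a1 b2) (Cmul a2 b1))))
      by (rewrite Hd; field; auto) end.
  rewrite E at 1. field; auto.
Qed.

Lemma span_of_det0 a b c : a <> V0 -> b <> V0 -> ~ samePt a b -> det3 a b c = C0 ->
  exists al be, c = Vadd (Vscal al a) (Vscal be b).
Proof.
  intros Ha Hb Hab Hd.
  destruct (Cx_eq0_dec (minor12 a b)) as [M12|M12];
  [destruct (Cx_eq0_dec (minor12 (rot a) (rot b))) as [M23|M23];
   [destruct (Cx_eq0_dec (minor12 (rot (rot a)) (rot (rot b)))) as [M31|M31]|]|].
  - exfalso. apply Hab, samePt_of_minors; auto.
  - rewrite <- det3_rot, <- det3_rot in Hd.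
    destruct (span_of_det0_chart _ _ _ M31 Hd) as [al [be E]].
    exists al, be. apply rot_inj, rot_inj. rewrite E. reflexivity.
  - rewrite <- det3_rot in Hd.
    destruct (span_of_det0_chart _ _ _ M23 Hd) as [al [be E]].
    exists al, be. apply rot_inj. rewrite E. reflexivity.
  - apply span_of_det0_chart; auto.
Qed.

Lemma circle_det0 p q r : onCommonCcircle p q r -> det3 p q r = C0.
Proof.
  intros [u [w [_ [_ [_ [[a1 [b1 ->]] [[a2 [b2 ->]] [a3 [b3 ->]]]]]]]]].
  destruct u, w; unfold det3, Vadd, Vscal; simpl. ring.
Qed.

Lemma herm_pair p q a b : isNull p -> isNull q ->
  herm (Vadd (Vscal a p) (Vscal b q)) (Vadd (Vscal a p) (Vscal b q)) =
  Cadd (Cmul (Cmul a (Cconj b)) (herm p q)) (Cmul (Cmul b (Cconj a)) (Cconj (herm p q))).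
Proof.
  intros Hp Hq. rewrite !herm_add_l, !herm_add_r, !herm_scal, !null_self by auto.
  rewrite (herm_sym p q). ring.
Qed.

(* Conversely, two distinct boundary points span a complex line of signature
   (1,1), which contains every point linearly dependent on them. *)
Lemma det0_circle p q r : isNull p -> isNull q -> isNull r -> ~ samePt p q ->
  det3 p q r = C0 -> onCommonCcircle p q r.
Proof.
  intros Hp Hq Hr Hpq Hd.
  pose proof (herm_neq0 _ _ Hp Hq Hpq) as Hg. pose proof (Cnorm2_pos _ Hg) as Hgp.
  assert (Hqp : herm q p <> C0) by (rewrite herm_sym; nonzero).
  exists p, q. split; [|split; [|split; [|split; [|split]]]].
  - intros a b H.
    assert (Ea : Cmul a (herm p q) = C0).
    { rewrite <- (herm_V0_l q), <- H, herm_add_l, !herm_scal_l, (null_self q) by auto. ring. }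
    assert (Eb : Cmul b (herm q p) = C0).
    { rewrite <- (herm_V0_l p), <- H, herm_add_l, !herm_scal_l, (null_self p) by auto. ring. }
    destruct (Cmul_eq0 _ _ Ea), (Cmul_eq0 _ _ Eb); tauto.
  - exists (Vadd (Vscal C1 p) (Vscal (herm p q) q)).
    split; [exists C1, (herm p q); reflexivity|].
    rewrite herm_pair by auto. destruct (herm p q) as [x y]; unfold Cnorm2 in Hgp; simpl in *. lra.
  - exists (Vadd (Vscal C1 p) (Vscal (Copp (herm p q)) q)).
    split; [exists C1, (Copp (herm p q)); reflexivity|].
    rewrite herm_pair by auto. destruct (herm p q) as [x y]; unfold Cnorm2 in Hgp; simpl in *. lra.
  - exists C1, C0. destruct p, q; unfold Vadd, Vscal; simpl; f_equal; ring.
  - exists C0, C1. destruct p, q; unfold Vadd, Vscal; simpl; f_equal; ring.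
  - apply span_of_det0; auto; [apply Hp | apply Hq].
Qed.

(** * The Hermitian triple product *)

Definition Tprod (a b c : V3) : Cx := Copp (Cmul (Cmul (herm a b) (herm b c)) (herm c a)).

Lemma cartanA_Tprod p1 p2 p3 : cartanA p1 p2 p3 = Carg (Tprod p1 p2 p3).
Proof. reflexivity. Qed.

(* The Gram determinant equals -|det|^2 (the form has determinant -1). *)
Lemma gram_det (a b c : V3) :
  let g11 := herm a a in let g22 := herm b b in let g33 := herm c c in
  let g12 := herm a b in let g23 := herm b c in let g31 := herm c a in
  let g21 := herm b a in let g32 := herm c b in let g13 := herm a c in
  Csub (Cadd (Cadd (Cmul (Cmul g11 g22) g33) (Cmul (Cmul g12 g23) g31)) (Cmul (Cmul g13 g21) g32))
       (Cadd (Cadd (Cmul (Cmul g11 g23) g32) (Cmul (Cmul g22 g13) g31)) (Cmul (Cmul g33 g12) g21))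
  = Copp (Cmul (det3 a b c) (Cconj (det3 a b c))).
Proof.
  destruct a as [a1 a2 a3], b as [b1 b2 b3], c as [c1 c2 c3].
  unfold herm, det3; simpl. autorewrite with cconj. ring.
Qed.

(* For null vectors the Gram determinant reduces to 2 Re T, whence
   2 Re T(a,b,c) = |det(a,b,c)|^2. *)
Lemma Tprod_Re a b c : isNull a -> isNull b -> isNull c ->
  2 * Re (Tprod a b c) = Cnorm2 (det3 a b c).
Proof.
  intros Ha Hb Hc. pose proof (gram_det a b c) as G. simpl in G.
  rewrite !null_self in G by auto.
  rewrite (herm_sym a b), (herm_sym b c), (herm_sym c a) in G.
  unfold Tprod.
  set (x := herm a b) in *. set (y := herm b c) in *. set (z := herm c a) in *.
  assert (E : Cadd (Cmul (Cmul x y) z) (Cconj (Cmul (Cmul x y) z))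
              = Copp (RtoC (Cnorm2 (det3 a b c)))).
  { rewrite <- Cmul_conj, <- G. autorewrite with cconj. ring. }
  apply (f_equal Re) in E. destruct (Cmul (Cmul x y) z) as [u v]. simpl in *. lra.
Qed.

Lemma Tprod_Re_pos a b c : isNull a -> isNull b -> isNull c -> ~ samePt a b ->
  ~ onCommonCcircle a b c -> 0 < Re (Tprod a b c).
Proof.
  intros Ha Hb Hc Hab Hci. pose proof (Tprod_Re a b c Ha Hb Hc) as E.
  destruct (Cx_eq0_dec (det3 a b c)) as [D|D].
  - exfalso; apply Hci, det0_circle; auto.
  - pose proof (Cnorm2_pos _ D). lra.
Qed.

(** * Transitivity of U(2,1) on triples with prescribed triple product *)

(* Given two triples of nonzero Gram entries whose triple products differ by a
   positive factor, rescaling the second triple of vectors makes the Gram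
   entries equal: m1 is the positive real with m1^2 = |h23|^2 / (r |g23|^2),
   then m2 and m3 are forced by the first two equations. *)
Lemma rescaling_for_gram (g12 g23 g31 h12 h23 h31 : Cx) (r : R) :
  g12 <> C0 -> g23 <> C0 -> g31 <> C0 -> h12 <> C0 -> h23 <> C0 -> h31 <> C0 -> 0 < r ->
  Copp (Cmul (Cmul h12 h23) h31) = Cmul (RtoC r) (Copp (Cmul (Cmul g12 g23) g31)) ->
  exists m1 m2 m3, m1 <> C0 /\ m2 <> C0 /\ m3 <> C0 /\
    Cmul (Cmul m1 (Cconj m2)) h12 = g12 /\ Cmul (Cmul m2 (Cconj m3)) h23 = g23 /\
    Cmul (Cmul m3 (Cconj m1)) h31 = g31.
Proof.
  intros G12 G23 G31 H12 H23 H31 Hr HT.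
  pose proof (Cnorm2_pos _ G23) as NG. pose proof (Cnorm2_pos _ H23) as NH.
  assert (Hq : 0 < Cnorm2 h23 / (r * Cnorm2 g23))
    by (apply Rdiv_lt_0_compat; [lra | apply Rmult_lt_0_compat; lra]).
  set (s := sqrt (Cnorm2 h23 / (r * Cnorm2 g23))).
  assert (Hs : 0 < s) by (apply sqrt_lt_R0; exact Hq).
  assert (Hs2 : Cmul (RtoC s) (RtoC s)
                = Cdiv (Cmul h23 (Cconj h23)) (Cmul (RtoC r) (Cmul g23 (Cconj g23)))).
  { rewrite <- RtoC_mul. unfold s. rewrite sqrt_sqrt by lra.
    rewrite !Cmul_conj, <- RtoC_mul. apply RtoC_div. nra. }
  assert (RtoC s <> C0) by (apply RtoC_neq0; lra).
  assert (RtoC r <> C0) by (apply RtoC_neq0; lra).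
  exists (RtoC s), (Cdiv (Cconj g12) (Cmul (RtoC s) (Cconj h12))),
         (Cdiv (Cmul (Cmul (Cconj g23) (RtoC s)) h12) (Cmul g12 (Cconj h23))).
  split; [auto|split; [|split; [|split; [|split]]]].
  - nonzero.
  - nonzero.
  - autorewrite with cconj. field. nonzero.
  - autorewrite with cconj. field. nonzero.
  - autorewrite with cconj.
    transitivity (Cdiv (Cmul (Cmul (Cmul (RtoC s) (RtoC s)) (Cmul (Cconj g23) h12)) h31)
                       (Cmul g12 (Cconj h23))).
    { field. nonzero. }
    rewrite Hs2.
    transitivity (Cdiv (Copp (Cmul (Cmul h12 h23) h31)) (Cmul (RtoC r) (Copp (Cmul g12 g23)))).
    { field. nonzero. }
    rewrite HT. field. nonzero.
Qed.

Lemma det3_rep12 x y : det3 x x y = C0. Proof. destruct x, y; unfold det3; ring. Qed.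
Lemma det3_rep13 x y : det3 x y x = C0. Proof. destruct x, y; unfold det3; ring. Qed.
Lemma det3_rep23 x y : det3 y x x = C0. Proof. destruct x, y; unfold det3; ring. Qed.

Definition e1 : V3 := mkV C1 C0 C0.
Definition e2 : V3 := mkV C0 C1 C0.
Definition e3 : V3 := mkV C0 C0 C1.

Section Transfer.
Variables a1 a2 a3 : V3.

Definition coord1 (z : V3) : Cx := Cdiv (det3 z a2 a3) (det3 a1 a2 a3).
Definition coord2 (z : V3) : Cx := Cdiv (det3 a1 z a3) (det3 a1 a2 a3).
Definition coord3 (z : V3) : Cx := Cdiv (det3 a1 a2 z) (det3 a1 a2 a3).

Lemma cramer z : det3 a1 a2 a3 <> C0 -> z = comb3 (coord1 z) (coord2 z) (coord3 z) a1 a2 a3.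
Proof.
  intros HD. unfold coord1, coord2, coord3.
  destruct a1 as [x1 x2 x3], a2 as [y1 y2 y3], a3 as [u1 u2 u3], z as [z1 z2 z3].
  unfold det3 in *; unfold comb3, Vadd, Vscal; simpl. f_equal; field; auto.
Qed.

Lemma herm_nondegenerate v : det3 a1 a2 a3 <> C0 ->
  herm v a1 = C0 -> herm v a2 = C0 -> herm v a3 = C0 -> v = V0.
Proof.
  intros HD H1 H2 H3.
  assert (K : forall e, herm v e = C0).
  { intros e. rewrite (cramer e HD), herm_comb3_r, H1, H2, H3. ring. }
  pose proof (K e1) as K1. pose proof (K e2) as K2. pose proof (K e3) as K3.
  destruct v as [a b c]; unfold herm, e1, e2, e3 in *; simpl in *.
  autorewrite with cconj in *. unfold V0; f_equal.
  - rewrite <- K3; ring.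
  - rewrite <- K2; ring.
  - rewrite <- K1; ring.
Qed.

Definition entry (v : V3) (n : nat) : Cx :=
  match n with 0%nat => v1 v | 1%nat => v2 v | _ => v3 v end.
Definition basis_vec (n : nat) : V3 :=
  match n with 0%nat => e1 | 1%nat => e2 | _ => e3 end.

(* The matrix of the linear map sending a_i to m_i b_i. *)
Definition transfer (b1 b2 b3 : V3) (m1 m2 m3 : Cx) : M3 := fun r c =>
  Cadd (Cadd (Cmul (Cmul (coord1 (basis_vec c)) m1) (entry b1 r))
             (Cmul (Cmul (coord2 (basis_vec c)) m2) (entry b2 r)))
       (Cmul (Cmul (coord3 (basis_vec c)) m3) (entry b3 r)).

Lemma mv_transfer b1 b2 b3 m1 m2 m3 z :
  mv (transfer b1 b2 b3 m1 m2 m3) z =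
  comb3 (Cmul (coord1 z) m1) (Cmul (coord2 z) m2) (Cmul (coord3 z) m3) b1 b2 b3.
Proof.
  unfold transfer, coord1, coord2, coord3, mv, comb3, Vadd, Vscal, basis_vec, entry, e1, e2, e3,
    Cdiv.
  set (Di := Cinv (det3 a1 a2 a3)).
  destruct a1 as [x1 x2 x3], a2 as [y1 y2 y3], a3 as [u1 u2 u3], z as [z1 z2 z3], b1, b2, b3.
  unfold det3; simpl. f_equal; ring.
Qed.

Lemma mv_transfer_basis b1 b2 b3 m1 m2 m3 : det3 a1 a2 a3 <> C0 ->
  mv (transfer b1 b2 b3 m1 m2 m3) a1 = Vscal m1 b1 /\
  mv (transfer b1 b2 b3 m1 m2 m3) a2 = Vscal m2 b2 /\
  mv (transfer b1 b2 b3 m1 m2 m3) a3 = Vscal m3 b3.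
Proof.
  intros HD. rewrite !mv_transfer. unfold coord1, coord2, coord3.
  rewrite ?det3_rep12, ?det3_rep13, ?det3_rep23.
  destruct b1, b2, b3; unfold comb3, Vadd, Vscal; simpl.
  repeat split; f_equal; field; auto.
Qed.

Lemma transfer_isU21 b1 b2 b3 m1 m2 m3 : det3 a1 a2 a3 <> C0 ->
  isNull a1 -> isNull a2 -> isNull a3 -> isNull b1 -> isNull b2 -> isNull b3 ->
  Cmul (Cmul m1 (Cconj m2)) (herm b1 b2) = herm a1 a2 ->
  Cmul (Cmul m2 (Cconj m3)) (herm b2 b3) = herm a2 a3 ->
  Cmul (Cmul m3 (Cconj m1)) (herm b3 b1) = herm a3 a1 ->
  isU21 (transfer b1 b2 b3 m1 m2 m3).
Proof.
  intros HD N1 N2 N3 M1 M2 M3 E12 E23 E31 z w.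
  rewrite (cramer z HD) at 2. rewrite (cramer w HD) at 2.
  rewrite !mv_transfer. unfold comb3.
  rewrite !herm_add_l, !herm_add_r, !herm_scal.
  rewrite !(null_self a1), !(null_self a2), !(null_self a3),
    !(null_self b1), !(null_self b2), !(null_self b3) by auto.
  rewrite (herm_sym a1 a2), (herm_sym a2 a3), (herm_sym a3 a1),
    (herm_sym b1 b2), (herm_sym b2 b3), (herm_sym b3 b1), <- E12, <- E23, <- E31.
  autorewrite with cconj. ring.
Qed.
End Transfer.

Lemma triple_transitive a1 a2 a3 b1 b2 b3 r :
  isNull a1 -> isNull a2 -> isNull a3 -> isNull b1 -> isNull b2 -> isNull b3 ->
  det3 a1 a2 a3 <> C0 ->
  herm a1 a2 <> C0 -> herm a2 a3 <> C0 -> herm a3 a1 <> C0 ->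
  herm b1 b2 <> C0 -> herm b2 b3 <> C0 -> herm b3 b1 <> C0 ->
  0 < r -> Tprod b1 b2 b3 = Cmul (RtoC r) (Tprod a1 a2 a3) ->
  exists G m1 m2 m3, isU21 G /\ m1 <> C0 /\ m2 <> C0 /\ m3 <> C0 /\
    mv G a1 = Vscal m1 b1 /\ mv G a2 = Vscal m2 b2 /\ mv G a3 = Vscal m3 b3.
Proof.
  intros N1 N2 N3 M1 M2 M3 HD G12 G23 G31 H12 H23 H31 Hr HT.
  destruct (rescaling_for_gram _ _ _ _ _ _ r G12 G23 G31 H12 H23 H31 Hr HT)
    as [m1 [m2 [m3 [Hm1 [Hm2 [Hm3 [E12 [E23 E31]]]]]]]].
  exists (transfer a1 a2 a3 b1 b2 b3 m1 m2 m3), m1, m2, m3.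
  destruct (mv_transfer_basis a1 a2 a3 b1 b2 b3 m1 m2 m3 HD) as [F1 [F2 F3]].
  repeat split; auto. apply transfer_isU21; auto.
Qed.

(* Conversely U(2,1) multiplies the triple product by a positive factor
   (|l1 l2 l3|^-2 when the lifts are rescaled by l_i). *)
Lemma Tprod_image G x1 x2 x3 y1 y2 y3 l1 l2 l3 : isU21 G ->
  l1 <> C0 -> l2 <> C0 -> l3 <> C0 ->
  mv G x1 = Vscal l1 y1 -> mv G x2 = Vscal l2 y2 -> mv G x3 = Vscal l3 y3 ->
  exists r, 0 < r /\ Tprod y1 y2 y3 = Cmul (RtoC r) (Tprod x1 x2 x3).
Proof.
  intros HG L1 L2 L3 F1 F2 F3.
  pose proof (Cnorm2_pos _ L1). pose proof (Cnorm2_pos _ L2). pose proof (Cnorm2_pos _ L3).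
  assert (Hp : 0 < Cnorm2 l1 * Cnorm2 l2 * Cnorm2 l3) by (repeat apply Rmult_lt_0_compat; auto).
  exists (/ (Cnorm2 l1 * Cnorm2 l2 * Cnorm2 l3)). split; [apply Rinv_0_lt_compat; auto|].
  unfold Tprod. rewrite <- (HG x1 x2), <- (HG x2 x3), <- (HG x3 x1), F1, F2, F3, !herm_scal.
  rewrite RtoC_inv by lra. rewrite !RtoC_mul, <- !Cmul_conj. field. nonzero.
Qed.

(** * The invariants in terms of Gram entries *)

Section GramAlgebra.
(* Gram entries g_ij = <p_i, p_j> of a quadruple of null vectors. *)
Variables g12 g23 g31 g41 g42 g43 : Cx.

(* X(p1,p2,p3,p4), X(p1,p3,p2,p4), T(p1,p2,p3), T(p4,p2,p3), and the numerator
   of X1 + X2 - 1. *)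
Definition gX1 : Cx := Cdiv (Cmul g42 g31) (Cmul g41 (Cconj g23)).
Definition gX2 : Cx := Cdiv (Cmul g43 (Cconj g12)) (Cmul g41 g23).
Definition gT1 : Cx := Copp (Cmul (Cmul g12 g23) g31).
Definition gT4 : Cx := Copp (Cmul (Cmul g42 g23) (Cconj g43)).
Definition gN : Cx :=
  Csub (Cadd (Cmul (Cmul g42 g31) g23) (Cmul (Cmul g43 (Cconj g12)) (Cconj g23)))
       (Cmul (Cmul g41 (Cconj g23)) g23).

Hypotheses (H12 : g12 <> C0) (H23 : g23 <> C0) (H31 : g31 <> C0) (H41 : g41 <> C0).
(* Nullity of p4 expressed through the Gram entries (see [null_relation]). *)
Hypothesis null_rel :
  Cmul gN (Cconj gN) = Cmul (Cadd gT1 (Cconj gT1)) (Cadd gT4 (Cconj gT4)).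
Hypotheses (PT1 : 0 < Re gT1) (PT4 : 0 < Re gT4).

Lemma gX_sum : Csub (Cadd gX1 gX2) C1 = Cdiv gN (Cmul (Cmul g41 (Cconj g23)) g23).
Proof. unfold gX1, gX2, gN. field. nonzero. Qed.

Lemma gX_identity :
  Cnorm2 (Csub (Cadd gX1 gX2) C1) =
  2 * Re (Cmul (Cmul gX1 (Cconj gX2)) (Cadd C1 (Cexpi (- (2 * Carg gT1))))).
Proof.
  pose proof (Re_pos_neq0 _ PT1) as HT.
  rewrite Cexpi_neg_2arg, gX_sum by auto.
  apply RtoC_inj. rewrite <- Cmul_conj, <- Cadd_conj.
  set (den := Cmul (Cmul g41 (Cconj g23)) g23).
  assert (Hden : den <> C0) by (unfold den; nonzero).
  transitivity (Cdiv (Cmul gN (Cconj gN)) (Cmul den (Cconj den))).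
  { autorewrite with cconj. field. nonzero. }
  rewrite null_rel. unfold den, gT1, gT4, gX1, gX2 in *. autorewrite with cconj.
  field. nonzero.
Qed.

(* |N|^2 = 4 Re T1 Re T4 > 0, so X1 + X2 <> 1. *)
Lemma gX_sum_neq0 : Csub (Cadd gX1 gX2) C1 <> C0.
Proof.
  rewrite gX_sum. apply Cmul_neq0; [|nonzero].
  intro E. rewrite E, !Cadd_conj, <- RtoC_mul in null_rel.
  replace (Cmul C0 (Cconj C0)) with (RtoC 0) in null_rel by (unfold RtoC; cx_ext).
  apply RtoC_inj in null_rel. nra.
Qed.

(* X1 conj(X2) e^{-i arg T1} is a positive multiple of T4, hence Re > 0. *)
Lemma gX_pos : Re (Cmul (Cmul gX1 (Cconj gX2)) (Cexpi (- Carg gT1))) > 0.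
Proof.
  pose proof (Re_pos_neq0 _ PT1) as HT. pose proof (Cabs_pos _ HT).
  pose proof (Cnorm2_pos _ HT). pose proof (Cnorm2_pos _ H41). pose proof (Cnorm2_pos _ H23).
  rewrite Cexpi_neg_arg by auto.
  set (c := Cnorm2 gT1 * / Cabs gT1 * / Cnorm2 g41 * / Cnorm2 g23 * / Cnorm2 g23).
  assert (Hc : 0 < c).
  { unfold c. repeat apply Rmult_lt_0_compat; auto; apply Rinv_0_lt_compat; auto. }
  replace (Cmul (Cmul gX1 (Cconj gX2)) (Cdiv (Cconj gT1) (RtoC (Cabs gT1))))
    with (Cmul (RtoC c) gT4).
  - rewrite Re_RtoC_mul. nra.
  - assert (RtoC (Cabs gT1) <> C0) by (apply RtoC_neq0; lra).
    unfold c. rewrite !RtoC_mul, !RtoC_inv by lra. rewrite <- !Cmul_conj.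
    unfold gX1, gX2, gT1, gT4 in *. autorewrite with cconj. field. nonzero.
Qed.

(* X1 / X2 is a positive multiple of T1 T4, so its argument is arg T1 + arg T4. *)
Lemma gX_arg : g42 <> C0 -> g43 <> C0 -> Carg (Cdiv gX1 gX2) = Carg gT1 + Carg gT4.
Proof.
  intros H42 H43.
  pose proof (Re_pos_neq0 _ PT1) as HT1. pose proof (Re_pos_neq0 _ PT4) as HT4.
  pose proof (Cabs_pos _ HT1). pose proof (Cabs_pos _ HT4).
  pose proof (Cnorm2_pos _ H12). pose proof (Cnorm2_pos _ H23). pose proof (Cnorm2_pos _ H43).
  set (rho := Cabs gT1 * Cabs gT4 * / Cnorm2 g12 * / Cnorm2 g23 * / Cnorm2 g43).
  assert (Hr : 0 < rho).
  { unfold rho. repeat apply Rmult_lt_0_compat; auto; apply Rinv_0_lt_compat; auto. }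
  pose proof (Carg_right_bound _ PT1). pose proof (Carg_right_bound _ PT4).
  rewrite <- (Carg_polar rho (Carg gT1 + Carg gT4)) by (auto; lra).
  f_equal. rewrite Cexpi_add, !Cexpi_arg by auto.
  assert (RtoC (Cabs gT1) <> C0) by (apply RtoC_neq0; lra).
  assert (RtoC (Cabs gT4) <> C0) by (apply RtoC_neq0; lra).
  unfold rho. rewrite !RtoC_mul, !RtoC_inv by lra. rewrite <- !Cmul_conj.
  unfold gX1, gX2, gT1, gT4 in *. autorewrite with cconj. field. nonzero.
Qed.
End GramAlgebra.

(* Expanding p4 in the basis p1, p2, p3, the equation <p4,p4> = 0 becomes the
   relation assumed in [GramAlgebra]. *)
Lemma null_relation p1 p2 p3 p4 :
  isNull p1 -> isNull p2 -> isNull p3 -> isNull p4 -> det3 p1 p2 p3 <> C0 ->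
  let g12 := herm p1 p2 in let g23 := herm p2 p3 in let g31 := herm p3 p1 in
  let g41 := herm p4 p1 in let g42 := herm p4 p2 in let g43 := herm p4 p3 in
  Cmul (gN g12 g23 g31 g41 g42 g43) (Cconj (gN g12 g23 g31 g41 g42 g43)) =
  Cmul (Cadd (gT1 g12 g23 g31) (Cconj (gT1 g12 g23 g31)))
       (Cadd (gT4 g23 g42 g43) (Cconj (gT4 g23 g42 g43))).
Proof.
  intros N1 N2 N3 N4 HD. intros.
  pose proof (cramer p1 p2 p3 p4 HD) as Ecr.
  set (al := coord1 p1 p2 p3 p4) in Ecr. set (be := coord2 p1 p2 p3 p4) in Ecr.
  set (ga := coord3 p1 p2 p3 p4) in Ecr. clearbody al be ga.
  pose proof (null_self _ N4) as Hn.
  unfold g12, g23, g31, g41, g42, g43, gN, gT1, gT4.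
  rewrite Ecr in Hn |- *. unfold comb3 in Hn |- *.
  rewrite !herm_add_l, !herm_add_r, !herm_scal in Hn. rewrite !herm_add_l, !herm_scal_l.
  rewrite !(null_self p1), !(null_self p2), !(null_self p3) in * by auto.
  rewrite (herm_sym p1 p2), (herm_sym p2 p3), (herm_sym p3 p1) in *.
  autorewrite with cconj in *.
  (* the difference of the two sides is a multiple of <p4,p4> *)
  match type of Hn with ?E = _ => match goal with |- _ = ?R =>
    transitivity (Cadd R (Cmul (Copp (Cmul (Cmul (herm p2 p3) (Cconj (herm p2 p3)))
        (Cadd (Cmul (Cmul (herm p1 p2) (herm p2 p3)) (herm p3 p1))
              (Cmul (Cmul (Cconj (herm p1 p2)) (Cconj (herm p2 p3))) (Cconj (herm p3 p1)))))) E))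
  end end.
  - ring.
  - rewrite Hn. ring.
Qed.

Lemma Tprod_cycle a b c : Tprod a b c = Tprod b c a.
Proof. unfold Tprod. ring. Qed.

Lemma crossX_gram p1 p2 p3 p4 :
  crossX p1 p2 p3 p4 = gX1 (herm p2 p3) (herm p3 p1) (herm p4 p1) (herm p4 p2).
Proof. unfold crossX, gX1. rewrite (herm_sym p2 p3). reflexivity. Qed.

Lemma crossX_swap_gram p1 p2 p3 p4 :
  crossX p1 p3 p2 p4 = gX2 (herm p1 p2) (herm p2 p3) (herm p4 p1) (herm p4 p3).
Proof. unfold crossX, gX2. rewrite (herm_sym p1 p2). reflexivity. Qed.

Lemma Tprod_gram1 p1 p2 p3 : Tprod p1 p2 p3 = gT1 (herm p1 p2) (herm p2 p3) (herm p3 p1).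
Proof. reflexivity. Qed.

Lemma Tprod_gram4 p2 p3 p4 : Tprod p4 p2 p3 = gT4 (herm p2 p3) (herm p4 p2) (herm p4 p3).
Proof. unfold Tprod, gT4. rewrite (herm_sym p4 p3). ring. Qed.

Definition generic4 (p1 p2 p3 p4 : V3) : Prop :=
  herm p1 p2 <> C0 /\ herm p2 p3 <> C0 /\ herm p3 p1 <> C0 /\
  herm p4 p1 <> C0 /\ herm p4 p2 <> C0 /\ herm p4 p3 <> C0 /\
  det3 p1 p2 p3 <> C0 /\ 0 < Re (Tprod p1 p2 p3) /\ 0 < Re (Tprod p4 p2 p3).

Lemma C4_generic P : inC4'' P -> generic4 (qp1 P) (qp2 P) (qp3 P) (qp4 P).
Proof.
  destruct P as [p1 p2 p3 p4]. unfold inC4''; simpl.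
  intros (N1&N2&N3&N4&S12&S13&S14&S23&S24&S34&C123&C234&_).
  repeat split.
  - apply herm_neq0; auto.
  - apply herm_neq0; auto.
  - apply herm_neq0'; auto.
  - apply herm_neq0'; auto.
  - apply herm_neq0'; auto.
  - apply herm_neq0'; auto.
  - intro D. apply C123, det0_circle; auto.
  - apply Tprod_Re_pos; auto.
  - rewrite Tprod_cycle. apply Tprod_Re_pos; auto.
Qed.

Lemma arg_condition_iff_orbit p1 p2 p3 p4 :
  isNull p1 -> isNull p2 -> isNull p3 -> isNull p4 -> generic4 p1 p2 p3 p4 ->
  Carg (Cdiv (crossX p1 p2 p3 p4) (crossX p1 p3 p2 p4)) = 2 * cartanA p1 p2 p3 <->
  (exists G : M3, isU21 G /\ samePt p2 (mv G p2) /\ samePt p3 (mv G p3)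
                  /\ samePt p4 (mv G p1)).
Proof.
  intros N1 N2 N3 N4 (H12&H23&H31&H41&H42&H43&HD&P1&P4).
  rewrite crossX_gram, crossX_swap_gram, cartanA_Tprod, gX_arg, <- Tprod_gram1, <- Tprod_gram4
    by (rewrite <- ?Tprod_gram1, <- ?Tprod_gram4; auto).
  split.
  - intro E. destruct (Carg_eq_pos_multiple (Tprod p1 p2 p3) (Tprod p4 p2 p3)) as [r [Hr ET]];
      auto; [lra|].
    assert (H34 : herm p3 p4 <> C0) by (rewrite herm_sym; nonzero).
    destruct (triple_transitive p1 p2 p3 p4 p2 p3 r) as (G&m1&m2&m3&HG&Hm1&Hm2&Hm3&F1&F2&F3);
      auto.
    exists G. repeat split; auto; [exists m2 | exists m3 | exists m1]; auto.
  - intros (G & HG & [l2 [L2 F2]] & [l3 [L3 F3]] & [l1 [L1 F1]]).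
    destruct (Tprod_image G p1 p2 p3 p4 p2 p3 l1 l2 l3) as [r [Hr ET]]; auto.
    rewrite ET, Carg_scale by auto. ring.
Qed.

Lemma B0_in_V4 P : inC4'' P -> let '(x1, x2, a) := B0 P in inV4 x1 x2 a.
Proof.
  intros HP. pose proof (C4_generic P HP) as Hgen.
  destruct P as [p1 p2 p3 p4]. destruct HP as (N1&N2&N3&N4&_&_&_&_&_&_&_&_&Orb). simpl in *.
  pose proof Hgen as (H12&H23&H31&H41&H42&H43&HD&P1&P4).
  pose proof (null_relation p1 p2 p3 p4 N1 N2 N3 N4 HD) as Hrel. simpl in Hrel.
  rewrite Tprod_gram1 in P1. rewrite Tprod_gram4 in P4.
  unfold B0; cbn [qp1 qp2 qp3 qp4]. unfold inV4. split; [|split; [|split; [|split]]].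
  - apply Carg_right_bound; auto.
  - rewrite (crossX_gram p1 p2 p3 p4), (crossX_swap_gram p1 p2 p3 p4).
    apply gX_identity; auto.
  - rewrite (crossX_gram p1 p2 p3 p4), (crossX_swap_gram p1 p2 p3 p4).
    apply gX_sum_neq0; auto.
  - rewrite (crossX_gram p1 p2 p3 p4), (crossX_swap_gram p1 p2 p3 p4).
    apply gX_pos; auto.
  - intro E. apply Orb, arg_condition_iff_orbit; auto.
Qed.

Lemma B0_invariant P Q : quadEquiv P Q -> B0 P = B0 Q.
Proof.
  destruct P as [p1 p2 p3 p4], Q as [q1 q2 q3 q4].
  intros [G [HG [[l1 [L1 E1]] [[l2 [L2 E2]] [[l3 [L3 E3]] [l4 [L4 E4]]]]]]]. simpl in *.
  subst. unfold B0, crossX, cartanA; cbn [qp1 qp2 qp3 qp4]. rewrite !herm_scal, !HG.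
  f_equal; [f_equal|].
  - set (c := Cmul (Cmul (Cmul l4 (Cconj l2)) l3) (Cconj l1)).
    assert (c <> C0) by (unfold c; nonzero).
    rewrite <- (Cdiv_cancel c) by auto. f_equal; unfold c; ring.
  - set (c := Cmul (Cmul (Cmul l4 (Cconj l3)) l2) (Cconj l1)).
    assert (c <> C0) by (unfold c; nonzero).
    rewrite <- (Cdiv_cancel c) by auto. f_equal; unfold c; ring.
  - pose proof (Cnorm2_pos _ L1). pose proof (Cnorm2_pos _ L2). pose proof (Cnorm2_pos _ L3).
    rewrite <- (Carg_scale (Cnorm2 l1 * Cnorm2 l2 * Cnorm2 l3))
      by (repeat apply Rmult_lt_0_compat; auto).
    f_equal. rewrite !RtoC_mul, <- !Cmul_conj. ring.
Qed.

Lemma herm_image G x y z m : isU21 G -> mv G y = Vscal m z ->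
  Cmul (Cconj m) (herm (mv G x) z) = herm x y.
Proof. intros HG F. rewrite <- (HG x y), F, herm_scal_r. reflexivity. Qed.

Lemma herm_images G i j k l mi mk : isU21 G -> mv G i = Vscal mi j -> mv G k = Vscal mk l ->
  Cmul (Cmul mi (Cconj mk)) (herm j l) = herm i k.
Proof. intros HG Fi Fk. rewrite <- (HG i k), Fi, Fk, herm_scal. reflexivity. Qed.

(* Once G maps p1, p2, p3 to lifts of q1, q2, q3, equality of the two cross
   ratios forces G p4 to be a lift of q4: G p4 - c q4 is orthogonal to the
   basis q1, q2, q3. *)
Lemma fourth_point_determined G p1 p2 p3 p4 q1 q2 q3 q4 m1 m2 m3 :
  isU21 G -> m1 <> C0 -> m2 <> C0 -> m3 <> C0 ->
  mv G p1 = Vscal m1 q1 -> mv G p2 = Vscal m2 q2 -> mv G p3 = Vscal m3 q3 ->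
  generic4 p1 p2 p3 p4 -> generic4 q1 q2 q3 q4 ->
  crossX p1 p2 p3 p4 = crossX q1 q2 q3 q4 -> crossX p1 p3 p2 p4 = crossX q1 q3 q2 q4 ->
  exists c, c <> C0 /\ mv G p4 = Vscal c q4.
Proof.
  intros HG Hm1 Hm2 Hm3 F1 F2 F3 (G12&G23&G31&G41&G42&G43&_) (H12&H23&H31&H41&H42&H43&HDq&_)
    EX1 EX2.
  assert (H32 : herm q3 q2 <> C0) by (rewrite herm_sym; nonzero).
  assert (H21 : herm q2 q1 <> C0) by (rewrite herm_sym; nonzero).
  pose proof (herm_image G p4 _ _ _ HG F1) as Y1. pose proof (herm_image G p4 _ _ _ HG F2) as Y2.
  pose proof (herm_image G p4 _ _ _ HG F3) as Y3.
  pose proof (herm_images G _ _ _ _ _ _ HG F3 F1) as K31.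
  pose proof (herm_images G _ _ _ _ _ _ HG F3 F2) as K32.
  pose proof (herm_images G _ _ _ _ _ _ HG F2 F1) as K21.
  pose proof (herm_images G _ _ _ _ _ _ HG F2 F3) as K23.
  set (y := mv G p4) in *.
  set (c := Cdiv (Cdiv (herm p4 p1) (Cconj m1)) (herm q4 q1)).
  assert (Hc : c <> C0) by (unfold c; nonzero).
  exists c. split; [exact Hc|]. apply Vadd_opp_eq0.
  apply (herm_nondegenerate q1 q2 q3 _ HDq); rewrite herm_add_l, herm_scal_l.
  - replace (herm y q1) with (Cdiv (herm p4 p1) (Cconj m1)) by (rewrite <- Y1; field; nonzero).
    unfold c. field. nonzero.
  - replace (herm y q2) with (Cdiv (herm p4 p2) (Cconj m2)) by (rewrite <- Y2; field; nonzero).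
    unfold crossX in EX1. rewrite <- K31, <- K32 in EX1.
    match type of EX1 with ?L = ?R =>
      transitivity (Cmul (Csub L R)
        (Cdiv (Cmul (herm p4 p1) (herm q3 q2)) (Cmul (Cconj m1) (herm q3 q1)))) end.
    + unfold c. field. nonzero.
    + rewrite EX1. ring.
  - replace (herm y q3) with (Cdiv (herm p4 p3) (Cconj m3)) by (rewrite <- Y3; field; nonzero).
    unfold crossX in EX2. rewrite <- K21, <- K23 in EX2.
    match type of EX2 with ?L = ?R =>
      transitivity (Cmul (Csub L R)
        (Cdiv (Cmul (herm p4 p1) (herm q2 q3)) (Cmul (Cconj m1) (herm q2 q1)))) end.
    + unfold c. field. nonzero.
    + rewrite EX2. ring.
Qed.

Lemma B0_injective P Q : inC4'' P -> inC4'' Q -> B0 P = B0 Q -> quadEquiv P Q.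
Proof.
  intros HP HQ EB. pose proof (C4_generic P HP) as GP. pose proof (C4_generic Q HQ) as GQ.
  destruct P as [p1 p2 p3 p4], Q as [q1 q2 q3 q4]. unfold B0 in EB.
  cbn [qp1 qp2 qp3 qp4] in *. apply pair_equal_spec in EB as [EB EA].
  apply pair_equal_spec in EB as [EX1 EX2].
  destruct HP as (N1&N2&N3&_), HQ as (M1&M2&M3&_).
  pose proof GP as (G12&G23&G31&_&_&_&HD&P1&_).
  pose proof GQ as (H12&H23&H31&_&_&_&_&Q1&_).
  (* equal Cartan invariants: the triple products differ by a positive factor *)
  destruct (Carg_eq_pos_multiple (Tprod p1 p2 p3) (Tprod q1 q2 q3)) as [r [Hr ET]]; auto.
  destruct (triple_transitive p1 p2 p3 q1 q2 q3 r) as (G&m1&m2&m3&HG&Hm1&Hm2&Hm3&F1&F2&F3);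
    auto.
  destruct (fourth_point_determined G p1 p2 p3 p4 q1 q2 q3 q4 m1 m2 m3) as [c [Hc F4]]; auto.
  exists G. repeat split; auto.
  - exists (Cinv m1). split; [nonzero | apply Vscal_inv; auto].
  - exists (Cinv m2). split; [nonzero | apply Vscal_inv; auto].
  - exists (Cinv m3). split; [nonzero | apply Vscal_inv; auto].
  - exists (Cinv c). split; [nonzero | apply Vscal_inv; auto].
Qed.

(** * B0 is onto V4: a normal form *)

Lemma e1_null : isNull e1.
Proof. split; [intro E; injection E; intros; lra | unfold herm, e1; simpl; cx_ext]. Qed.

Lemma e3_null : isNull e3.
Proof. split; [intro E; injection E; intros; lra | unfold herm, e3; simpl; cx_ext]. Qed.

Lemma herm_e1_e3 : herm e1 e3 = C1.
Proof. unfold herm, e1, e3; simpl; cx_ext. Qed.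

Ltac gram := unfold herm; simpl; autorewrite with cconj; try (field; nonzero); try ring.

Section NormalForm.
(* A point (w1, w2, a) of V4; the normal form is
   p1 = (-conj T, 1, 1), p2 = e1, p3 = e3, p4 = (-w2 T / w1, T (w1 + w2 - 1) / w1, 1)
   with T = 1/2 + i tan(a)/2, so that T(p1,p2,p3) = T has argument a. *)
Variables (w1 w2 : Cx) (a : R).
Hypothesis Ha : - (PI / 2) < a < PI / 2.
Hypotheses (W1 : w1 <> C0) (W2 : w2 <> C0).

Definition nfT : Cx := Cmk (1/2) (tan a / 2).
Definition nf1 : V3 := mkV (Copp (Cconj nfT)) C1 C1.
Definition nf4 : V3 :=
  mkV (Cdiv (Cmul w2 (Copp nfT)) w1) (Cdiv (Cmul nfT (Csub (Cadd w1 w2) C1)) w1) C1.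
Definition normal_quad : Quad := mkQ nf1 e1 e3 nf4.

Lemma nfT_sum : Cadd nfT (Cconj nfT) = C1.
Proof. unfold nfT; cx_ext; field. Qed.

Lemma nfT_Re_pos : 0 < Re nfT.
Proof. unfold nfT; simpl; lra. Qed.

Lemma nfT_neq0 : nfT <> C0.
Proof. apply Re_pos_neq0, nfT_Re_pos. Qed.

Lemma nfT_arg : Carg nfT = a.
Proof.
  rewrite Carg_right by apply nfT_Re_pos. unfold nfT; simpl.
  replace (tan a / 2 / (1 / 2)) with (tan a) by field. apply atan_tan. lra.
Qed.

Lemma nf_herm12 : herm nf1 e1 = C1.
Proof. unfold nf1, e1; gram. Qed.

Lemma nf_herm31 : herm e3 nf1 = Copp nfT.
Proof. unfold nf1, e3; gram. Qed.

Lemma nf_herm41 : herm nf4 nf1 = Cdiv (Copp nfT) w1.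
Proof. unfold nf4, nf1; gram. Qed.

Lemma nf_herm42 : herm nf4 e1 = C1.
Proof. unfold nf4, e1; gram. Qed.

Lemma nf_herm43 : herm nf4 e3 = Cdiv (Cmul w2 (Copp nfT)) w1.
Proof. unfold nf4, e3; gram. Qed.

Lemma nf1_null : isNull nf1.
Proof.
  split; [unfold nf1; intro E; injection E; intros; lra|].
  transitivity (Csub C1 (Cadd nfT (Cconj nfT))); [unfold nf1; gram|].
  rewrite nfT_sum; ring.
Qed.

(* p4 is null exactly because (w1, w2, a) satisfies the identity of V4. *)
Lemma nf4_null :
  Cnorm2 (Csub (Cadd w1 w2) C1)
    = 2 * Re (Cmul (Cmul w1 (Cconj w2)) (Cadd C1 (Cexpi (- (2 * a))))) ->
  isNull nf4.
Proof.
  intros Hid. split; [unfold nf4; intro E; injection E; intros; lra|].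
  pose proof nfT_neq0.
  rewrite <- nfT_arg, Cexpi_neg_2arg in Hid by apply nfT_Re_pos.
  set (Z := Csub (Cadd w1 w2) C1) in *.
  set (W := Cmul (Cmul w1 (Cconj w2)) (Cadd C1 (Cdiv (Cconj nfT) nfT))) in *.
  assert (HZW : Cmul Z (Cconj Z) = Cadd W (Cconj W))
    by (rewrite Cmul_conj, Cadd_conj, Hid; reflexivity).
  transitivity (Cadd
    (Cmul (Cdiv (Cmul nfT (Cconj nfT)) (Cmul w1 (Cconj w1)))
          (Csub (Cmul Z (Cconj Z)) (Cadd W (Cconj W))))
    (Cmul (Csub (Cadd nfT (Cconj nfT)) C1)
          (Cadd (Cdiv (Cmul w2 nfT) w1) (Cdiv (Cmul (Cconj w2) (Cconj nfT)) (Cconj w1))))).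
  - unfold nf4, herm, W, Z; simpl. autorewrite with cconj. field. nonzero.
  - rewrite HZW, nfT_sum. ring.
Qed.

Lemma nf_B0 : B0 normal_quad = (w1, w2, a).
Proof.
  pose proof nfT_neq0.
  unfold B0, normal_quad, crossX; cbn [qp1 qp2 qp3 qp4].
  rewrite cartanA_Tprod, Tprod_gram1, nf_herm12, herm_e1_e3, nf_herm31, nf_herm41, nf_herm42,
    nf_herm43, (herm_sym nf1 e1), nf_herm12, (herm_sym e1 e3), herm_e1_e3.
  replace (gT1 C1 C1 (Copp nfT)) with nfT by (unfold gT1; ring).
  rewrite nfT_arg. autorewrite with cconj. repeat f_equal; field; nonzero.
Qed.

Lemma nf_det123 : det3 nf1 e1 e3 = Copp C1.
Proof. unfold det3, nf1, e1, e3; ring. Qed.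

Lemma nf_det234 : det3 e1 e3 nf4 = Copp (Cdiv (Cmul nfT (Csub (Cadd w1 w2) C1)) w1).
Proof. unfold det3, nf4, e1, e3; ring. Qed.

Lemma nf_Tprod123 : Tprod nf1 e1 e3 = nfT.
Proof. rewrite Tprod_gram1, nf_herm12, herm_e1_e3, nf_herm31. unfold gT1; ring. Qed.

Lemma nf_not_circle123 : ~ onCommonCcircle nf1 e1 e3.
Proof.
  intro C. apply circle_det0 in C. rewrite nf_det123 in C. revert C. nonzero.
Qed.

Lemma nf_not_circle234 : Csub (Cadd w1 w2) C1 <> C0 -> ~ onCommonCcircle e1 e3 nf4.
Proof.
  intros HZ C. pose proof nfT_neq0. apply circle_det0 in C. rewrite nf_det234 in C.
  revert C. nonzero.
Qed.

Lemma nf_generic : Csub (Cadd w1 w2) C1 <> C0 -> isNull nf4 -> generic4 nf1 e1 e3 nf4.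
Proof.
  intros HZ N4. pose proof nfT_neq0.
  unfold generic4. rewrite nf_herm12, herm_e1_e3, nf_herm31, nf_herm41, nf_herm42, nf_herm43.
  repeat split; try nonzero.
  - rewrite nf_det123. nonzero.
  - rewrite nf_Tprod123. apply nfT_Re_pos.
  - rewrite Tprod_cycle. apply Tprod_Re_pos; auto using e1_null, e3_null, nf_not_circle234.
    apply not_samePt; [apply e1_null|]. rewrite herm_e1_e3. nonzero.
Qed.

Lemma nf_in_C4 : Csub (Cadd w1 w2) C1 <> C0 -> isNull nf4 -> Carg (Cdiv w1 w2) <> 2 * a ->
  inC4'' normal_quad.
Proof.
  intros HZ N4 Harg. pose proof (nf_generic HZ N4) as Hgen.
  pose proof Hgen as (H12&H23&H31&H41&H42&H43&_).
  pose proof e1_null as N2. pose proof e3_null as N3. pose proof nf1_null as N1.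
  unfold inC4'', normal_quad; cbn [qp1 qp2 qp3 qp4].
  refine (conj N1 (conj N2 (conj N3 (conj N4 _)))).
  repeat split; auto using not_samePt, not_samePt', nf_not_circle123, nf_not_circle234.
  (* the orbit condition: otherwise arg(w1/w2) = 2a *)
  intro Orb. apply Harg.
  pose proof nf_B0 as E. unfold B0, normal_quad in E; cbn [qp1 qp2 qp3 qp4] in E.
  apply pair_equal_spec in E as [E EA]. apply pair_equal_spec in E as [EX1 EX2].
  rewrite <- EX1, <- EX2, <- EA. apply arg_condition_iff_orbit; auto.
Qed.
End NormalForm.

Lemma B0_surjective w1 w2 a : inV4 w1 w2 a -> exists P, inC4'' P /\ B0 P = (w1, w2, a).
Proof.
  intros (Ha & Hid & HZ & Hpos & Harg).
  assert (W1 : w1 <> C0).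
  { intro E; subst w1. replace (Cmul (Cmul C0 (Cconj w2)) (Cexpi (- a))) with C0 in Hpos
      by ring. simpl in Hpos; lra. }
  assert (W2 : w2 <> C0).
  { intro E; subst w2. replace (Cmul (Cmul w1 (Cconj C0)) (Cexpi (- a))) with C0 in Hpos
      by (autorewrite with cconj; ring). simpl in Hpos; lra. }
  exists (normal_quad w1 w2 a). split.
  - apply nf_in_C4; auto. apply nf4_null; auto.
  - apply nf_B0; auto.
Qed.

Theorem mainTheorem7 :
  (* B0 takes values in V4 (contains the identity and the inequalities) *)
  (forall P : Quad, inC4'' P ->
     let '(x1, x2, a) := B0 P in inV4 x1 x2 a) /\
  (* well defined on F4'' = C4''/PU(2,1) (independent of lifts and representative) *)
  (forall P Q : Quad, inC4'' P -> inC4'' Q -> quadEquiv P Q -> B0 P = B0 Q) /\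
  (* injective on F4'' *)
  (forall P Q : Quad, inC4'' P -> inC4'' Q -> B0 P = B0 Q -> quadEquiv P Q) /\
  (* surjective onto V4 *)
  (forall (w1 w2 : Cx) (a : R), inV4 w1 w2 a ->
     exists P : Quad, inC4'' P /\ B0 P = (w1, w2, a)).
Proof.
  split; [exact B0_in_V4 | split; [|split]].
  - intros P Q _ _. apply B0_invariant.
  - exact B0_injective.
  - exact B0_surjective.
Qed.
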